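(* Let $f : \mathbb{R}^{n_1} \times \mathbb{R}^{n_2} \to \mathbb{R}^{n_3}$, $(u,v) \mapsto u * v$, be a bilinear map. Then $Q(f)$ equals the maximal $r$ for which there exist $u_1,\ldots,u_r \in \mathbb{R}^{n_1}$ and $v_1,\ldots,v_r \in \mathbb{R}^{n_2}$ such that $u_1 * v_1, \ldots, u_r * v_r$ are linearly independent modulo the subspace $\langle \{ u_i * v_j \mid 1 \leq i,j \leq r,\ i \neq j\} \rangle_{\mathbb{R}}$.
   Context: For a bilinear map $f : \mathbb{R}^{n_1} \times \mathbb{R}^{n_2} \to \mathbb{R}^{n_3}$, its subrank $Q(f)$ is the largest $r$ such that there exist linear maps $\varphi_1 : \mathbb{R}^r \to \mathbb{R}^{n_1}$, $\varphi_2 : \mathbb{R}^r \to \mathbb{R}^{n_2}$, $\varphi_3 : \mathbb{R}^{n_3} \to \mathbb{R}^r$ with $\varphi_3(f(\varphi_1(a), \varphi_2(b))) = (a_1b_1,\ldots,a_rb_r)$ for all $a,b \in \mathbb{R}^r$. *)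

From HB Require Import structures.
From mathcomp Require Import all_boot all_order all_algebra.
From mathcomp Require Import reals.
Set Implicit Arguments. Unset Strict Implicit. Unset Printing Implicit Defensive.
Import Order.TTheory GRing.Theory Num.Theory.
Local Open Scope ring_scope.

Definition bilinear_map (R : realType) (n1 n2 n3 : nat)
    (f : 'rV[R]_n1 -> 'rV[R]_n2 -> 'rV[R]_n3) : Prop :=
  (forall v, linear (fun u => f u v)) /\ (forall u, linear (f u)).

(* r is admissible in the definition of the subrank Q(f): there are linear
   maps phi1 : R^r -> R^n1, phi2 : R^r -> R^n2, phi3 : R^n3 -> R^r with
   phi3 (f (phi1 a) (phi2 b)) = (a_1 b_1, ..., a_r b_r) for all a, b. *)
Definition subrank_admissible (R : realType) (n1 n2 n3 : nat)
    (f : 'rV[R]_n1 -> 'rV[R]_n2 -> 'rV[R]_n3) (r : nat) : Prop :=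
  exists (phi1 : 'rV[R]_r -> 'rV[R]_n1) (phi2 : 'rV[R]_r -> 'rV[R]_n2)
         (phi3 : 'rV[R]_n3 -> 'rV[R]_r),
    [/\ linear phi1, linear phi2, linear phi3 &
        forall a b : 'rV[R]_r,
          phi3 (f (phi1 a) (phi2 b)) = \row_(i < r) (a 0 i * b 0 i)].

Definition offdiag_span (R : realType) (n1 n2 n3 r : nat)
    (f : 'rV[R]_n1 -> 'rV[R]_n2 -> 'rV[R]_n3)
    (u : 'I_r -> 'rV[R]_n1) (v : 'I_r -> 'rV[R]_n2) : {vspace 'rV[R]_n3} :=
  <<[seq f (u ij.1) (v ij.2) | ij <- enum [pred ij : 'I_r * 'I_r | ij.1 != ij.2]]>>%VS.

(* r is admissible in the right-hand characterization: there are u_1..u_r,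
   v_1..v_r with u_1*v_1, ..., u_r*v_r linearly independent modulo the
   off-diagonal span W, i.e. sum_i c_i (u_i*v_i) in W implies all c_i = 0. *)
Definition diag_indep_admissible (R : realType) (n1 n2 n3 : nat)
    (f : 'rV[R]_n1 -> 'rV[R]_n2 -> 'rV[R]_n3) (r : nat) : Prop :=
  exists (u : 'I_r -> 'rV[R]_n1) (v : 'I_r -> 'rV[R]_n2),
    forall c : 'I_r -> R,
      (\sum_(i < r) c i *: f (u i) (v i) \in offdiag_span f u v) ->
      forall i, c i = 0.

Definition is_max_nat (P : nat -> Prop) (m : nat) : Prop :=
  P m /\ forall r, P r -> (r <= m)%N.

(* Both sides are characterised, for each r, by the existence of u_1..u_r,
   v_1..v_r and a linear phi : R^n3 -> R^r with phi (u_i * v_j) = [i = j] e_i.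
   From subrank maps take u_i = phi1 e_i, v_j = phi2 e_j and phi = phi3;
   conversely phi1 a = sum_i a_i u_i and phi2 b = sum_j b_j v_j, and
   bilinearity gives phi (phi1 a * phi2 b) = sum_i a_i b_i e_i.  Such a phi
   kills the off-diagonal span W and maps the diagonal products to a basis,
   so these are independent modulo W; conversely, independence modulo W makes
   the diagonal products a basis of a subspace D with D :&: W = 0, and phi is
   the projection onto D along W followed by coordinates in that basis. *)

From HB Require Import structures.
From mathcomp Require Import all_boot all_order all_algebra.
From mathcomp Require Import reals.
Set Implicit Arguments. Unset Strict Implicit. Unset Printing Implicit Defensive.
Import GRing.Theory.
Local Open Scope ring_scope.

Definition pack_linear (K : pzRingType) (U V : lmodType K) (f : U -> V)
    (f_linear : linear f) : {linear U -> V} :=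
  HB.pack f (GRing.isLinear.Build K U V *:%R f f_linear).

Definition pack_bilinear (K : nzRingType) (U1 U2 U3 : lmodType K)
    (f : U1 -> U2 -> U3)
    (f_bilinear : (forall y, linear (f^~ y)) /\ (forall x, linear (f x))) :
    {bilinear U1 -> U2 -> U3} :=
  HB.pack f (bilinear_isBilinear.Build K U1 U2 U3 *:%R *:%R f
               (f_bilinear.1, f_bilinear.2)).

Lemma row_delta_mul (K : pzRingType) (r : nat) (i j : 'I_r) :
  \row_(k < r) ((delta_mx 0 i : 'rV[K]_r) 0 k * (delta_mx 0 j : 'rV[K]_r) 0 k) =
  if i == j then delta_mx 0 i else 0.
Proof.
apply/rowP => k; rewrite !mxE eqxx /=.
case: (eqVneq i j) => [<-|neq_ij]; rewrite mxE /=.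
  by case: (k == i); rewrite ?mulr1 ?mulr0.
case: (eqVneq k i) => [->|_]; last by rewrite mul0r.
by rewrite (negbTE neq_ij) mulr0.
Qed.

Lemma sum_scale_delta (K : pzRingType) (r : nat) (c : 'I_r -> K) :
  \sum_i c i *: delta_mx 0 i = \row_i c i :> 'rV[K]_r.
Proof. by rewrite [RHS]row_sum_delta; apply: eq_bigr => i _; rewrite mxE. Qed.

Lemma linear_row_comb (K : pzRingType) (U : lmodType K) (r : nat)
    (x : 'I_r -> U) :
  linear (fun a : 'rV[K]_r => \sum_i a 0 i *: x i).
Proof.
move=> c a b; rewrite scaler_sumr -big_split /=.
by apply: eq_bigr => i _; rewrite !mxE scalerDl scalerA.
Qed.

Lemma linear_span_eq0 (K : fieldType) (V : vectType K) (U : lmodType K)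
    (phi : {linear V -> U}) (s : seq V) :
  {in s, forall x, phi x = 0} -> {in <<s>>%VS, forall x, phi x = 0}.
Proof.
move=> phi_s x /(@coord_span _ _ _ (in_tuple s)) ->.
rewrite linear_sum big1 // => k _.
by rewrite linearZ /= phi_s ?scaler0 // mem_nth.
Qed.

Section FreeModulo.
Variables (K : fieldType) (V : vectType K) (r : nat).

Definition free_modulo (d : 'I_r -> V) (W : {vspace V}) : Prop :=
  forall c : 'I_r -> K, \sum_i c i *: d i \in W -> forall i, c i = 0.

Variables (d : 'I_r -> V) (W : {vspace V}).

Let D := [tuple d i | i < r].

Let D_nth (i : 'I_r) : D`_i = d i. Proof. exact: nth_mktuple. Qed.

Let sum_D (c : 'I_r -> K) : \sum_i c i *: D`_i = \sum_i c i *: d i.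
Proof. by apply: eq_bigr => i _; rewrite D_nth. Qed.

Lemma free_modulo_free : free_modulo d W -> free D.
Proof.
by move=> dW; apply/freeP => c; rewrite sum_D => c0; apply: dW; rewrite c0 mem0v.
Qed.

Lemma free_modulo_capv0 : free_modulo d W -> (<<D>> :&: W = 0)%VS.
Proof.
move=> dW; apply/eqP; rewrite -subv0; apply/subvP => x.
move=> /memv_capP [/coord_span xD xW].
rewrite memv0 xD big1 // => i _.
by rewrite (dW (coord D ^~ x)) ?scale0r // -sum_D -xD.
Qed.

Lemma free_modulo_dual : free_modulo d W ->
  exists phi : {linear V -> 'rV[K]_r},
    {in W, forall w, phi w = 0} /\ forall i, phi (d i) = delta_mx 0 i.
Proof.
move=> dW; have DW0 := free_modulo_capv0 dW.
have WD0 : (W :&: <<D>> = 0)%VS by rewrite capvC.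
pose pi := daddv_pi <<D>> W.
have pi_W w : w \in W -> pi w = 0.
  move=> Ww; have := daddv_pi_add DW0 (subvP (addvSr <<D>> W) _ Ww).
  by rewrite (daddv_pi_id WD0 Ww) => /(canRL (addrK w)); rewrite subrr.
have phi_linear : linear (fun x => \row_i coord D i (pi x)).
  by move=> a x y; apply/rowP => i; rewrite !mxE !linearP.
exists (pack_linear phi_linear); split=> [w Ww | i] /=.
  by apply/rowP => i; rewrite !mxE pi_W ?linear0.
apply/rowP => k; rewrite mxE -D_nth.
rewrite daddv_pi_id ?memv_span ?mem_nth ?size_tuple //.
by rewrite coord_free ?free_modulo_free // mxE eqxx eq_sym.
Qed.

Lemma dual_free_modulo (phi : {linear V -> 'rV[K]_r}) :
  {in W, forall w, phi w = 0} -> (forall i, phi (d i) = delta_mx 0 i) ->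
  free_modulo d W.
Proof.
move=> phi_W phi_d c /phi_W; rewrite linear_sum.
rewrite (eq_bigr (fun i => c i *: delta_mx 0 i)) => [|i _]; last first.
  by rewrite linearZ phi_d.
by rewrite sum_scale_delta => /rowP c0 i; have := c0 i; rewrite !mxE.
Qed.

End FreeModulo.

Section UnitTensor.
Variables (K : fieldType) (U1 U2 U3 : lmodType K) (r : nat).

Definition unit_tensor_projection (f : U1 -> U2 -> U3)
    (u : 'I_r -> U1) (v : 'I_r -> U2) (phi : {linear U3 -> 'rV[K]_r}) : Prop :=
  forall i j, phi (f (u i) (v j)) = if i == j then delta_mx 0 i else 0.

Lemma unit_tensor_projection_sum (F : {bilinear U1 -> U2 -> U3}) u v phi
    (a b : 'I_r -> K) :
  unit_tensor_projection F u v phi ->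
  phi (F (\sum_i a i *: u i) (\sum_j b j *: v j)) = \row_i (a i * b i).
Proof.
move=> phi_uv; rewrite -sum_scale_delta linear_sumlz linear_sum.
apply: eq_bigr => i _; rewrite linearZl_LR linearZ /= linear_sumr linear_sum.
rewrite (bigD1 i) //= big1 ?addr0 => [|j neq_ji].
  by rewrite linearZr_LR linearZ /= phi_uv eqxx scalerA.
by rewrite linearZr_LR linearZ /= phi_uv eq_sym (negbTE neq_ji) scaler0.
Qed.

End UnitTensor.

Section Subrank.
Variables (R : realType) (n1 n2 n3 : nat).
Variable f : 'rV[R]_n1 -> 'rV[R]_n2 -> 'rV[R]_n3.

Lemma subrank_admissibleP (r : nat) : bilinear_map f ->
  subrank_admissible f r <->
  exists u v (phi : {linear 'rV[R]_n3 -> 'rV[R]_r}),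
    unit_tensor_projection f u v phi.
Proof.
move=> f_bilinear; split=> [[phi1 [phi2 [phi3 [_ _ phi3_linear f_diag]]]] | ].
  exists (fun i => phi1 (delta_mx 0 i)), (fun j => phi2 (delta_mx 0 j)).
  by exists (pack_linear phi3_linear) => i j /=; rewrite f_diag row_delta_mul.
move=> [u [v [phi phi_uv]]].
exists (fun a => \sum_i a 0 i *: u i), (fun b => \sum_i b 0 i *: v i), phi.
split; [exact: linear_row_comb | exact: linear_row_comb | exact: linearP |].
move=> a b; exact: (unit_tensor_projection_sum (F := pack_bilinear f_bilinear)).
Qed.

Lemma diag_indep_admissibleP (r : nat) :
  diag_indep_admissible f r <->
  exists u v (phi : {linear 'rV[R]_n3 -> 'rV[R]_r}),
    unit_tensor_projection f u v phi.
Proof.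
split=> [[u [v uv_free]] | [u [v [phi phi_uv]]]].
  have [phi [phi_W phi_d]] := free_modulo_dual uv_free.
  exists u, v, phi => i j; case: eqVneq => [<- | neq_ij]; first exact: phi_d.
  apply: phi_W; apply: memv_span; apply/mapP; exists (i, j) => //.
  by rewrite mem_enum inE.
exists u, v; apply: (dual_free_modulo (phi := phi)); last first.
  by move=> i; rewrite phi_uv eqxx.
apply: linear_span_eq0 => x /mapP [[i j]]; rewrite mem_enum inE /= => neq_ij ->.
by rewrite phi_uv (negbTE neq_ij).
Qed.

End Subrank.

Lemma is_max_nat_iff (P Q : nat -> Prop) (m : nat) :
  (forall r, P r <-> Q r) -> is_max_nat P m <-> is_max_nat Q m.
Proof.
move=> PQ; split=> [[Pm P_le] | [Qm Q_le]].
  by split=> [|r Qr]; [exact/PQ | apply/P_le/PQ].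
by split=> [|r Pr]; [exact/PQ | apply/Q_le/PQ].
Qed.

Theorem proposition5p1 (R : realType) (n1 n2 n3 : nat)
    (f : 'rV[R]_n1 -> 'rV[R]_n2 -> 'rV[R]_n3) :
  bilinear_map f ->
  forall m : nat,
    is_max_nat (subrank_admissible f) m <-> is_max_nat (diag_indep_admissible f) m.
Proof.
move=> f_bilinear m; apply: is_max_nat_iff => r.
by rewrite subrank_admissibleP // diag_indep_admissibleP.
Qed.
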